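(* Let $f:\mathbb{R}^n\to\mathbb{R}$ be a continuously differentiable convex function. Let $H$ be a diagonal matrix with nonnegative diagonal entries such that $f(y)\le f(x)+\nabla f(x)^T(y-x)+\tfrac12\|y-x\|_H^2$ for all $x,y\in\mathbb{R}^n$, and let $D$ be a diagonal matrix with $D\succ H$. Let $(x_k)$ be a sequence generated by the IWHT method with $D$, and assume $(x_k)$ has a limit point $\bar x$. Then the entire sequence $(x_k)$ converges to $\bar x$.
   Context: $\|z\|_A^2=z^TAz$. $C_s=\{x\in\mathbb{R}^n:\|x\|_0\le s\}$ for a positive integer $s$, where $\|x\|_0$ is the number of nonzero entries. $\mathcal{P}_{C_s}(z)=\operatorname{argmin}_{y\in C_s}\|y-z\|_2^2$ (set-valued). IWHT with diagonal $D\succ0$: start from $x_0\in C_s$; for $k\ge0$ pick $y_{k+1}\in\mathcal{P}_{C_s}\big(D^{1/2}x_k-D^{-1/2}\nabla f(x_k)\big)$ and set $x_{k+1}=D^{-1/2}y_{k+1}$. *)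

From HB Require Import structures.
From mathcomp Require Import all_boot all_order all_algebra.
From mathcomp Require Import all_classical all_reals all_analysis.
Set Implicit Arguments. Unset Strict Implicit. Unset Printing Implicit Defensive.
Import Order.TTheory GRing.Theory Num.Theory.
Import numFieldNormedType.Exports.
Local Open Scope ring_scope.
Local Open Scope classical_set_scope.

Section Defs.
Variables (R : realType) (n : nat).

Definition basisv (i : 'I_n) : 'rV[R]_n := delta_mx 0 i.

Definition grad (f : 'rV[R]_n -> R) (x : 'rV[R]_n) : 'rV[R]_n :=
  \row_i ('D_(basisv i) f x).

Definition C1 (f : 'rV[R]_n -> R) : Prop :=
  (forall x, differentiable f x) /\ continuous (grad f).

Definition convex_fun (f : 'rV[R]_n -> R) : Prop :=
  forall (x y : 'rV[R]_n) (t : R), 0 <= t <= 1 ->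
    f (t *: x + (1 - t) *: y) <= t * f x + (1 - t) * f y.

Definition dotv (u v : 'rV[R]_n) : R := (u *m v^T) 0 0.

Definition qnorm2 (A : 'M[R]_n) (z : 'rV[R]_n) : R := (z *m A *m z^T) 0 0.

Definition posdef (A : 'M[R]_n) : Prop :=
  forall z : 'rV[R]_n, z != 0 -> 0 < qnorm2 A z.

Definition l0norm (x : 'rV[R]_n) : nat := #|[set i | x 0 i != 0]|.

Definition Cs (s : nat) (x : 'rV[R]_n) : Prop := (l0norm x <= s)%N.

Definition sqn (z : 'rV[R]_n) : R := \sum_i (z 0 i) ^+ 2.

(* set-valued projection onto C_s: y \in P_{C_s}(z) *)
Definition proj_Cs (s : nat) (z y : 'rV[R]_n) : Prop :=
  Cs s y /\ forall y', Cs s y' -> sqn (y - z) <= sqn (y' - z).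

Definition diag_sqrt (D : 'M[R]_n) : 'M[R]_n :=
  diag_mx (\row_i Num.sqrt (D i i)).
Definition diag_invsqrt (D : 'M[R]_n) : 'M[R]_n :=
  diag_mx (\row_i (Num.sqrt (D i i))^-1).

(* x is a sequence generated by IWHT with D (row-vector convention: M z := z *m M,
   which agrees since all matrices involved are diagonal, hence symmetric) *)
Definition IWHT_seq (f : 'rV[R]_n -> R) (s : nat) (D : 'M[R]_n)
    (x : nat -> 'rV[R]_n) : Prop :=
  Cs s (x 0%N) /\
  forall k, exists y : 'rV[R]_n,
    proj_Cs s (x k *m diag_sqrt D - grad f (x k) *m diag_invsqrt D) y /\
    x k.+1 = y *m diag_invsqrt D.

Definition seq_cvg_to (x : nat -> 'rV[R]_n) (l : 'rV[R]_n) : Prop :=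
  x @ \oo --> l.

Definition seq_limit_point (x : nat -> 'rV[R]_n) (xbar : 'rV[R]_n) : Prop :=
  exists phi : nat -> nat, (forall k, (phi k < phi k.+1)%N) /\
    seq_cvg_to (x \o phi) xbar.

End Defs.

From HB Require Import structures.
From mathcomp Require Import all_boot all_order all_algebra.
From mathcomp Require Import all_classical all_reals all_analysis.
From mathcomp Require Import ring lra.
Import Order.TTheory GRing.Theory Num.Theory.
Import numFieldNormedType.Exports.
Local Open Scope ring_scope.
Local Open Scope classical_set_scope.

Set Implicit Arguments.
Unset Strict Implicit.
Unset Printing Implicit Defensive.

(** The IWHT step is a coordinatewise scaled gradient step restricted to a
    support of size at most [s]; with [D > H] it decreases [f] by
    [||x_{k+1} - x_k||^2_{D-H} / 2], so [f(x_k)] decreases to [f(xbar)] and the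
    steps vanish.  Once [x_k] is close to [xbar] in [||.||_D] and the steps are
    small, [x_{k+1}] keeps every nonzero coordinate of [xbar]; on that common
    support the step is an exact scaled gradient step, and convexity gives the
    Fejer inequality [||x_{k+1} - xbar||_D <= ||x_k - xbar||_D].  Hence, once
    the subsequence enters this neighbourhood, the whole sequence is trapped in
    it and [||x_k - xbar||_D] decreases to the value [0] of its subsequential
    limit. *)

Section RealSequences.
Variable R : realType.
Implicit Types (a : R ^nat) (phi : nat -> nat).

Lemma strict_incr_ge phi : (forall k, (phi k < phi k.+1)%N) ->
  forall k, (k <= phi k)%N.
Proof. by move=> phiS; elim=> // k IH; exact: leq_ltn_trans IH (phiS k). Qed.

Lemma nonincreasing_subseq_ge a phi l :
  (forall k, a k.+1 <= a k) -> (forall k, (phi k < phi k.+1)%N) ->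
  (a \o phi) @ \oo --> l -> forall k, l <= a k.
Proof.
move=> aS phiS aphi k; apply: (cvgr_to_le aphi); exists k => // j /= kj.
have {}kj : (k <= phi j)%N := leq_trans kj (strict_incr_ge phiS j).
rewrite -(subnK kj); elim: (phi j - k)%N => // m IH.
exact: le_trans (aS _) IH.
Qed.

(* Once a term of the subsequence is within [ep] of [l], no later term exceeds it. *)
Lemma cvg_trapped_subseq a phi l ep :
  (forall k, (phi k < phi k.+1)%N) -> (a \o phi) @ \oo --> l ->
  (forall k, l <= a k) -> 0 < ep ->
  (\forall k \near \oo, a k - l < ep -> a k.+1 <= a k) ->
  a @ \oo --> l.
Proof.
move=> phiS aphi la ep0 [N _ aS]; apply/cvgrPdist_lt => e e0.
have dist_l k : `|l - a k| = a k - l by rewrite distrC ger0_norm ?subr_ge0.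
have r0 : 0 < Num.min e ep by rewrite lt_min e0 ep0.
have [M _ near_l] := (cvgrPdist_lt _ _).1 aphi _ r0.
pose k0 := phi (maxn M N).
have Nk0 : (N <= k0)%N := leq_trans (leq_maxr M N) (strict_incr_ge phiS _).
have /andP[ak0e ak0ep] : (a k0 - l < e) && (a k0 - l < ep).
  by rewrite -lt_min -dist_l; apply: near_l; rewrite /= leq_maxl.
have trapped m : a (m + k0)%N <= a k0.
  elim: m => // m IH; apply: le_trans (IH); rewrite addSn.
  apply: aS; first by rewrite /= (leq_trans Nk0) ?leq_addl.
  by apply: le_lt_trans ak0ep; rewrite lerD2r.
near=> k; have k0k : (k0 <= k)%N by near: k; exists k0.
by rewrite dist_l; apply: le_lt_trans ak0e; rewrite lerD2r -(subnK k0k).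
Unshelve. all: by end_near.
Qed.

End RealSequences.

Section QuadraticForms.
Variables (R : realType) (n : nat).
Implicit Types (d : 'I_n -> R) (u v z : 'rV[R]_n).

Definition wnorm2 d u : R := \sum_i d i * u 0 i ^+ 2.

Lemma row_entryB u v i : (u - v) 0 i = u 0 i - v 0 i.
Proof. by rewrite !mxE. Qed.

Lemma dotvE u v : dotv u v = \sum_i u 0 i * v 0 i.
Proof. by rewrite /dotv mxE; apply: eq_bigr => i _; rewrite mxE. Qed.

Lemma dotvBr u v w : dotv u (v - w) = dotv u v - dotv u w.
Proof. by rewrite !dotvE -sumrB; apply: eq_bigr => i _; rewrite !mxE mulrBr. Qed.

Lemma qnorm2_diag (A : 'M[R]_n) z : is_diag_mx A ->
  qnorm2 A z = wnorm2 (fun i => A i i) z.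
Proof.
move=> /is_diag_mxP dA; rewrite /qnorm2 mxE; apply: eq_bigr => i _.
rewrite !mxE (bigD1 i) //= big1 ?addr0 => [|j ji]; first by rewrite expr2; ring.
by rewrite dA ?mulr0.
Qed.

Lemma qnorm2_basisv (A : 'M[R]_n) i : qnorm2 A (@basisv R n i) = A i i.
Proof. by rewrite /qnorm2 /basisv -rowE trmx_delta -colE !mxE. Qed.

Lemma basisv_neq0 i : @basisv R n i != 0.
Proof.
apply/eqP => /matrixP/(_ 0 i); rewrite !mxE !eqxx /=; exact/eqP/oner_neq0.
Qed.

Lemma wnorm2_ge_coord d u i : (forall j, 0 <= d j) -> d i * u 0 i ^+ 2 <= wnorm2 d u.
Proof.
move=> d0; rewrite /wnorm2 (bigD1 i) //= lerDl.
by apply: sumr_ge0 => j _; rewrite mulr_ge0 ?sqr_ge0.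
Qed.

Lemma wnorm2_ge0 d u : (forall i, 0 <= d i) -> 0 <= wnorm2 d u.
Proof. by move=> d0; apply: sumr_ge0 => i _; rewrite mulr_ge0 ?sqr_ge0. Qed.

Lemma ler_wnorm2 d1 d2 u : (forall i, d1 i <= d2 i) -> wnorm2 d1 u <= wnorm2 d2 u.
Proof. by move=> d12; apply: ler_sum => i _; rewrite ler_wpM2r ?sqr_ge0. Qed.

Lemma wnorm2_weightB d1 d2 u :
  wnorm2 (fun i => d1 i - d2 i) u = wnorm2 d1 u - wnorm2 d2 u.
Proof. by rewrite /wnorm2 -sumrB; apply: eq_bigr => i _; rewrite mulrBl. Qed.

Lemma wnorm2D_le d u v : (forall i, 0 <= d i) ->
  wnorm2 d (u + v) <= 2 * wnorm2 d u + 2 * wnorm2 d v.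
Proof.
move=> d0; rewrite /wnorm2 !mulr_sumr -big_split /=; apply: ler_sum => i _.
have := mulr_ge0 (d0 i) (sqr_ge0 (u 0 i - v 0 i)); rewrite !mxE; nra.
Qed.

Lemma wnorm2_continuous d : continuous (wnorm2 d).
Proof.
have -> : wnorm2 d = \sum_i (fun u : 'rV[R]_n => d i * u 0 i ^+ 2).
  by apply/funext => u; rewrite fct_sumE.
apply: (big_ind (fun g : 'rV[R]_n -> R => continuous g)).
- exact: cst_continuous.
- by move=> g h cg ch u; apply: continuousD; [exact: cg | exact: ch].
- move=> i _ u; have coord := @coord_continuous R 1 n 0 i.
  apply: (@continuousM _ _ (fun=> d i) (fun u : 'rV[R]_n => u 0 i ^+ 2)).
    exact: cst_continuous.
  exact: (continuousM (coord u) (coord u)).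
Qed.

Lemma fin_pos_lbound (F : 'I_n -> R) : (forall i, 0 < F i) ->
  exists2 c, 0 < c & forall i, c <= F i.
Proof.
move=> F0; have S0 : 0 < 1 + \sum_i (F i)^-1.
  by rewrite ltr_wpDr // sumr_ge0 // => i _; rewrite invr_ge0 ltW.
exists (1 + \sum_i (F i)^-1)^-1 => [|i]; first by rewrite invr_gt0.
rewrite -[F i]invrK lef_pV2 ?posrE ?invr_gt0 // (bigD1 i) //= addrCA lerDl.
by rewrite addr_ge0 // sumr_ge0 // => j _; rewrite invr_ge0 ltW.
Qed.

Lemma wnorm2_lt_norm d m u e : (forall i, m <= d i) -> 0 < m -> 0 < e ->
  wnorm2 d u < m * e ^+ 2 -> `|u| < e.
Proof.
move=> md m0 e0 ue; rewrite -[`|u|]/(mx_norm u) mx_normrE.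
apply: bigmax_lt => // -[a i] _; rewrite /= (ord1 a).
have d0 j : 0 <= d j by exact: le_trans (ltW m0) (md j).
have sq_lt : u 0 i ^+ 2 < e ^+ 2.
  rewrite -(ltr_pM2l m0).
  apply: le_lt_trans (le_lt_trans (wnorm2_ge_coord u i d0) ue).
  by rewrite ler_wpM2r ?sqr_ge0.
by rewrite ltr_norml; apply/andP; split; nra.
Qed.

Lemma wnorm2_near_supp d v : (forall i, 0 < d i) ->
  exists2 ep, 0 < ep &
    forall u, wnorm2 d (u - v) < ep -> forall i, v 0 i != 0 -> u 0 i != 0.
Proof.
move=> d0.
pose F i := if v 0 i != 0 then d i * v 0 i ^+ 2 else 1.
have [i|ep ep0 epF] := @fin_pos_lbound F.
  by rewrite /F; case: ifPn => // vi; rewrite mulr_gt0 ?exprn_even_gt0.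
exists ep => // u uv i vi; apply: contraTneq uv => ui; rewrite -leNgt.
apply: le_trans (wnorm2_ge_coord _ i (fun j => ltW (d0 j))).
by have := epF i; rewrite /F vi !mxE ui sub0r sqrrN.
Qed.

End QuadraticForms.

Section Convexity.
Variables (R : realType) (n : nat) (f : 'rV[R]_n -> R).

Lemma dotv_grad x v : differentiable f x -> dotv (grad f x) v = 'd f x v.
Proof.
move=> df; rewrite dotvE [in RHS](row_sum_delta v) linear_sum.
by apply: eq_bigr => i _; rewrite linearZ /= mxE /basisv deriveE // mulrC.
Qed.

Lemma convex_tangent_le x y : convex_fun f -> differentiable f x ->
  f x + dotv (grad f x) (y - x) <= f y.
Proof.
move=> cf df; rewrite dotv_grad // -deriveE //; set v := y - x.
have dv : derivable f x v by exact: diff_derivable.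
have : (fun h : R => h^-1 *: ((f \o shift x) (h *: v) - f x)) @ 0^'+ --> 'D_v f x.
  apply: cvg_trans dv; apply: cvg_app.
  by apply: within_subset => // h /= h0; rewrite gt_eqF.
move=> /cvgr_to_le slope_le; rewrite -lerBrDl; apply: slope_le; near=> h.
have h0 : 0 < h by near: h; exact: nbhs_right_gt.
have h1 : h <= 1 by near: h; apply: nbhs_right_le; exact: ltr01.
rewrite /=; have -> : h *: v + x = h *: y + (1 - h) *: x.
  by rewrite /v scalerBr scalerBl scale1r -addrA [X in _ + X]addrC.
have := cf y x h; rewrite (ltW h0) h1 ler_pdivrMl // => /(_ isT); lra.
Unshelve. all: by end_near.
Qed.

End Convexity.

Section SparseProjection.
Variables (R : realType) (n s : nat).
Implicit Types (u v y z : 'rV[R]_n).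

Lemma l0norm_le_supp u v : (forall i, v 0 i != 0 -> u 0 i != 0) ->
  (l0norm v <= l0norm u)%N.
Proof.
by move=> uv; apply: subset_leq_card; apply/fintype.subsetP => i; rewrite !inE; exact: uv.
Qed.

(* Moving the coordinate [i] of [y] to [z 0 i] does not enlarge the support. *)
Lemma proj_Cs_coord z y i : proj_Cs s z y -> y 0 i != 0 -> y 0 i = z 0 i.
Proof.
move=> [Cy opt] yi; pose y' := \row_j (if j == i then z 0 i else y 0 j).
have Cy' : Cs s y'.
  apply: leq_trans Cy; apply: l0norm_le_supp => j; rewrite mxE.
  by case: ifP => [/eqP -> _|].
have := opt _ Cy'; rewrite /sqn (bigD1 i) //= [X in _ <= X](bigD1 i) //=.
rewrite [X in _ <= _ + X](eq_bigr (fun j => (y - z) 0 j ^+ 2)); last first.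
  by move=> j /negPf ji; rewrite !mxE ji.
rewrite lerD2r !mxE eqxx subrr expr0n /= => sq_le0.
by apply/eqP; rewrite -subr_eq0 -sqrf_eq0 eq_le sq_le0 sqr_ge0.
Qed.

End SparseProjection.

Section ScaledProjectionStep.
Variables (R : realType) (n s : nat) (D : 'M[R]_n).

Lemma mul_diag_sqrtE (u : 'rV[R]_n) i :
  (u *m diag_sqrt D) 0 i = u 0 i * Num.sqrt (D i i).
Proof. by rewrite /diag_sqrt mul_mx_diag !mxE. Qed.

Lemma mul_diag_invsqrtE (u : 'rV[R]_n) i :
  (u *m diag_invsqrt D) 0 i = u 0 i / Num.sqrt (D i i).
Proof. by rewrite /diag_invsqrt mul_mx_diag !mxE. Qed.

Variables (x g y : 'rV[R]_n).
Hypothesis D_gt0 : forall i, 0 < D i i.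
Hypothesis y_proj : proj_Cs s (x *m diag_sqrt D - g *m diag_invsqrt D) y.

Let xn := y *m diag_invsqrt D.

Let sqrtD_neq0 i : Num.sqrt (D i i) != 0.
Proof. by rewrite gt_eqF // sqrtr_gt0. Qed.

Let D_sqr i : D i i = Num.sqrt (D i i) ^+ 2.
Proof. by rewrite sqr_sqrtr // ltW. Qed.

Lemma scaled_step_Cs : Cs s xn.
Proof.
apply: leq_trans y_proj.1; apply: l0norm_le_supp => i.
by rewrite mul_diag_invsqrtE mulf_eq0 negb_or => /andP[].
Qed.

Lemma scaled_step_supp i : xn 0 i != 0 -> D i i * (xn 0 i - x 0 i) + g 0 i = 0.
Proof.
rewrite mul_diag_invsqrtE mulf_eq0 negb_or => /andP[yi _].
rewrite (proj_Cs_coord y_proj yi) row_entryB mul_diag_sqrtE mul_diag_invsqrtE.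
by have := sqrtD_neq0 i; have := D_sqr i; set a := Num.sqrt _ => -> a0; field.
Qed.

(* Compare with the feasible point [x *m diag_sqrt D] (the previous iterate). *)
Lemma scaled_step_descent : Cs s x ->
  wnorm2 (fun i => D i i) (xn - x) + 2 * dotv g (xn - x) <= 0.
Proof.
move=> Cx; have Cxs : Cs s (x *m diag_sqrt D).
  apply: leq_trans Cx; apply: l0norm_le_supp => i.
  by rewrite mul_diag_sqrtE mulf_eq0 negb_or => /andP[].
set z := x *m diag_sqrt D - g *m diag_invsqrt D.
have -> : wnorm2 (fun i => D i i) (xn - x) + 2 * dotv g (xn - x) =
    \sum_i ((y - z) 0 i ^+ 2 - (x *m diag_sqrt D - z) 0 i ^+ 2).
  rewrite dotvE /wnorm2 mulr_sumr -big_split /=; apply: eq_bigr => i _.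
  rewrite /xn /z !row_entryB !mul_diag_sqrtE !mul_diag_invsqrtE.
  by have := sqrtD_neq0 i; have := D_sqr i; set a := Num.sqrt _ => -> a0; field.
by rewrite sumrB subr_le0; exact: y_proj.2.
Qed.

End ScaledProjectionStep.

Section IWHT.
Variables (R : realType) (n s : nat) (f : 'rV[R]_n -> R) (H D : 'M[R]_n).
Variables (x : nat -> 'rV[R]_n) (xbar : 'rV[R]_n).
Hypothesis f_diff : forall z, differentiable f z.
Hypothesis f_convex : convex_fun f.
Hypothesis H_diag : is_diag_mx H.
Hypothesis H_ge0 : forall i, 0 <= H i i.
Hypothesis f_upper : forall u v : 'rV[R]_n,
  f v <= f u + dotv (grad f u) (v - u) + 2^-1 * qnorm2 H (v - u).
Hypothesis DH_posdef : posdef (D - H).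
Hypothesis x_iwht : IWHT_seq f s D x.
Hypothesis xbar_limit : seq_limit_point x xbar.

Let d i := D i i.
Let h i := H i i.

Lemma H_lt_D i : h i < d i.
Proof.
by have := DH_posdef (@basisv_neq0 R n i); rewrite qnorm2_basisv !mxE subr_gt0.
Qed.

Lemma D_gt0 i : 0 < d i.
Proof. exact: le_lt_trans (H_ge0 i) (H_lt_D i). Qed.

Let d_ge0 i : 0 <= d i.
Proof. exact: ltW (D_gt0 i). Qed.

Lemma iwht_Cs k : Cs s (x k).
Proof.
case: x_iwht => Cx0 step; elim: k => // k _.
by have [y [yp ->]] := step k; exact: scaled_step_Cs yp.
Qed.

Lemma iwht_supp k i : x k.+1 0 i != 0 ->
  d i * (x k.+1 0 i - x k 0 i) + grad f (x k) 0 i = 0.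
Proof. by have [y [yp ->]] := x_iwht.2 k; exact: (scaled_step_supp D_gt0 yp). Qed.

Lemma iwht_descent k :
  wnorm2 d (x k.+1 - x k) + 2 * dotv (grad f (x k)) (x k.+1 - x k) <= 0.
Proof.
by have [y [yp ->]] := x_iwht.2 k; exact: scaled_step_descent D_gt0 yp (iwht_Cs k).
Qed.

Lemma sufficient_decrease k :
  f (x k.+1) + 2^-1 * wnorm2 (fun i => d i - h i) (x k.+1 - x k) <= f (x k).
Proof.
have := f_upper (x k) (x k.+1); rewrite qnorm2_diag // -/h wnorm2_weightB.
have := iwht_descent k; lra.
Qed.

Lemma f_nonincreasing k : f (x k.+1) <= f (x k).
Proof.
apply: le_trans (sufficient_decrease k); rewrite lerDl mulr_ge0 // wnorm2_ge0 // => i.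
by rewrite subr_ge0 ltW // H_lt_D.
Qed.

Lemma f_subseq_cvg phi : seq_cvg_to (x \o phi) xbar -> (f \o x \o phi) @ \oo --> f xbar.
Proof. exact: continuous_cvg (differentiable_continuous (f_diff xbar)). Qed.

Lemma f_ge_limit k : f xbar <= f (x k).
Proof.
have [phi [phiS xphi]] := xbar_limit.
exact: nonincreasing_subseq_ge f_nonincreasing phiS (f_subseq_cvg xphi) k.
Qed.

Lemma f_cvg : (f \o x) @ \oo --> f xbar.
Proof.
have [phi [phiS xphi]] := xbar_limit.
apply: (cvg_trapped_subseq phiS (f_subseq_cvg xphi) f_ge_limit ltr01).
by apply: nearW => k _; exact: f_nonincreasing.
Qed.

Lemma steps_vanish ep : 0 < ep -> \forall k \near \oo, wnorm2 d (x k.+1 - x k) < ep.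
Proof.
move=> ep0; have [i|c c0 c_le] := @fin_pos_lbound _ _ (fun i => (d i - h i) / d i).
  by rewrite divr_gt0 ?D_gt0 // subr_gt0 H_lt_D.
have cd u : c * wnorm2 d u <= wnorm2 (fun i => d i - h i) u.
  rewrite /wnorm2 mulr_sumr; apply: ler_sum => i _; rewrite mulrA ler_wpM2r ?sqr_ge0 //.
  by rewrite -ler_pdivlMr ?D_gt0.
have cep0 : 0 < c * ep / 2 by rewrite divr_gt0 ?mulr_gt0.
apply: filterS ((cvgrPdist_lt _ _).1 f_cvg _ cep0) => k /=.
rewrite distrC ger0_norm ?subr_ge0 ?f_ge_limit // => fk.
rewrite -(ltr_pM2l c0); apply: le_lt_trans (cd _) _.
have := sufficient_decrease k; have := f_ge_limit k.+1; lra.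
Qed.

(* Off the support of [x k.+1] both [x k.+1] and [xbar] vanish, and on it the
   step is an exact scaled gradient step: this gives [expand].  Convexity, the
   upper model of [f] and [f xbar <= f (x k.+1)] then bound its cross term by
   [||x k.+1 - x k||_H^2]. *)
Lemma dist_fejer k : (forall i, xbar 0 i != 0 -> x k.+1 0 i != 0) ->
  wnorm2 d (x k.+1 - xbar) <= wnorm2 d (x k - xbar).
Proof.
move=> supp; set p := x k.+1; set q := x k; set g := grad f q.
have expand : wnorm2 d (p - xbar) =
    wnorm2 d (q - xbar) + 2 * dotv g (xbar - p) - wnorm2 d (p - q).
  rewrite dotvE /wnorm2 mulr_sumr -big_split -sumrB /=; apply: eq_bigr => i _.
  rewrite !row_entryB; have [p0|pi] := eqVneq (p 0 i) 0.
    have xb0 : xbar 0 i = 0.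
      by case: (eqVneq (xbar 0 i) 0) => // /supp; rewrite -/p p0 eqxx.
    by rewrite p0 xb0; ring.
  have := iwht_supp pi; rewrite -/p -/q -/g => step.
  have -> : g 0 i = - (d i * (p 0 i - q 0 i)) by lra.
  ring.
have tangent := convex_tangent_le xbar f_convex (f_diff q).
have upper := f_upper q p; rewrite qnorm2_diag // -/h in upper.
have hd : wnorm2 h (p - q) <= wnorm2 d (p - q).
  by apply: ler_wnorm2 => i; exact: ltW (H_lt_D i).
have lim_le := f_ge_limit k.+1.
have dot_split : dotv g (xbar - p) = dotv g (xbar - q) - dotv g (p - q).
  by rewrite -dotvBr opprB addrA subrK.
rewrite expand; lra.
Qed.

Lemma dist_nonincreasing_near : exists2 ep, 0 < ep &
  \forall k \near \oo, wnorm2 d (x k - xbar) < ep ->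
    wnorm2 d (x k.+1 - xbar) <= wnorm2 d (x k - xbar).
Proof.
have [ep ep0 supp] := wnorm2_near_supp xbar D_gt0.
have ep4 : 0 < ep / 4 by rewrite divr_gt0.
exists (ep / 4) => //; apply: filterS (steps_vanish ep4) => k step_lt dist_lt.
apply: dist_fejer; apply: supp.
have -> : x k.+1 - xbar = (x k - xbar) + (x k.+1 - x k) by rewrite [RHS]addrC addrA subrK.
have := wnorm2D_le (x k - xbar) (x k.+1 - x k) d_ge0; lra.
Qed.

Lemma dist_cvg0 : (fun k => wnorm2 d (x k - xbar)) @ \oo --> 0.
Proof.
have [phi [phiS xphi]] := xbar_limit; have [ep ep0 mono] := dist_nonincreasing_near.
apply: (cvg_trapped_subseq phiS _ _ ep0).
- have : (x \o phi) - cst xbar @ \oo --> (0 : 'rV[R]_n).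
    by rewrite -(subrr xbar); apply: cvgB => //; exact: cvg_cst.
  move/(continuous_cvg _ (wnorm2_continuous (d := d) (x := 0))).
  by rewrite /wnorm2 big1 // => i _; rewrite mxE expr0n mulr0.
- by move=> k; exact: wnorm2_ge0.
- by apply: filterS mono => k; rewrite subr0.
Qed.

Lemma iwht_cvg : seq_cvg_to x xbar.
Proof.
have [m m0 md] := fin_pos_lbound D_gt0.
apply/cvgrPdist_lt => e e0.
have me0 : 0 < m * e ^+ 2 by rewrite mulr_gt0 ?exprn_gt0.
apply: filterS ((cvgrPdist_lt _ _).1 dist_cvg0 _ me0) => k.
rewrite sub0r normrN ger0_norm ?wnorm2_ge0 // distrC => dist_lt.
exact: wnorm2_lt_norm md m0 e0 dist_lt.
Qed.

End IWHT.

Theorem theorem4p8 (R : realType) (n s : nat) (f : 'rV[R]_n -> R)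
    (H D : 'M[R]_n) (x : nat -> 'rV[R]_n) (xbar : 'rV[R]_n) :
  (0 < s)%N ->
  C1 f -> convex_fun f ->
  is_diag_mx H -> (forall i, 0 <= H i i) ->
  (forall x y : 'rV[R]_n,
     f y <= f x + dotv (grad f x) (y - x) + 2^-1 * qnorm2 H (y - x)) ->
  is_diag_mx D -> posdef (D - H) ->
  IWHT_seq f s D x ->
  seq_limit_point x xbar ->
  seq_cvg_to x xbar.
Proof.
move=> _ [f_diff _] f_convex H_diag H_ge0 f_upper _ DH_posdef x_iwht xbar_limit.
exact: (iwht_cvg f_diff f_convex H_diag H_ge0 f_upper DH_posdef x_iwht xbar_limit).
Qed.
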